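(* Let $G=G_+G_-$ be a unique factorization of a finite group $G$ and let $\xi,\eta:G_+\to G_-$ be group homomorphisms. Put $G_+'=\{u\xi(u^{-1}):u\in G_+\}$, $G_+''=\{\eta(u^{-1})u:u\in G_+\}$ and $F:G_+'\to G_+''$, $F(u\xi(u^{-1}))=\eta(u)u^{-1}$. Then the conjunction of the conditions (a) $G_+'$ and $G_+''$ are normal subgroups of $G$, and (b) $F$ is a group isomorphism, is equivalent to the following identities holding for all $u,v\in G_+$ and $x\in G_-$: \begin{align*} &(1)\ \xi(u)^v=\xi(u^{\eta(v)}),\qquad (2)\ {}^u\eta(v)=\eta({}^{\xi(u)}v),\qquad (3)\ uv=({}^{\xi(u)}v)(u^{\eta(v)}),\\ &(4)\ \xi({}^x u)\,x^u=x\,\xi(u),\qquad (5)\ \eta({}^x u)\,x^u=x\,\eta(u). \end{align*} Moreover, for each $i\in\{1,\dots,5\}$, identity $(i)$ (for all $u,v\in G_+$, $x\in G_-$) is equivalent to identity $(i')$ (for all $u,v\in G_+$, $x\in G_-$), where \begin{align*} &(1')\ {}^v\xi(u)=\xi({}^{\eta(v)}u),\qquad (2')\ \eta(v)^u=\eta(v^{\xi(u)}),\qquad (3')\ uv=({}^{\eta(u)}v)(u^{\xi(v)}),\\ &(4')\ {}^u x\,\xi(u^x)=\xi(u)\,x,\qquad (5')\ {}^u x\,\eta(u^x)=\eta(u)\,x. \end{align*}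
   Context: A unique factorization $G=G_+G_-$ consists of subgroups $G_+,G_-$ of $G$ such that every $g\in G$ can be written uniquely as $g=g_+g_-$ with $g_+\in G_+$, $g_-\in G_-$. For $u\in G_+$ and $x\in G_-$ define ${}^u x\in G_-$, $u^x\in G_+$, ${}^x u\in G_+$, $x^u\in G_-$ by $ux=({}^u x)(u^x)$ and $xu=({}^x u)(x^u)$ (unique factorizations in $G=G_-G_+$ and $G=G_+G_-$ respectively). *)

From mathcomp Require Import all_boot all_fingroup.
Set Implicit Arguments. Unset Strict Implicit. Unset Printing Implicit Defensive.
Local Open Scope group_scope.

Definition unique_factorization (gT : finGroupType) (G A B : {group gT}) : Prop :=
  A \subset G /\ B \subset G /\
  forall g, g \in G -> exists! p : gT * gT, [/\ p.1 \in A, p.2 \in B & g = p.1 * p.2].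

(* The (chosen) factorization g = a b with a in A, b in B (unique when G = AB
   is a unique factorization; default (1,1) otherwise). *)
Definition fact (gT : finGroupType) (A B : {set gT}) (g : gT) : gT * gT :=
  odflt (1, 1) [pick p : gT * gT | (p.1 \in A) && (p.2 \in B) && (g == p.1 * p.2)].

Section Actions.
Variables (gT : finGroupType) (Gp Gm : {set gT}).
(* For u in G_+, x in G_- :  u x = (^u x)(u^x)  in G = G_- G_+ *)
Definition lactP (u x : gT) : gT := (fact Gm Gp (u * x)).1.
Definition ractP (u x : gT) : gT := (fact Gm Gp (u * x)).2.
(* x u = (^x u)(x^u)  in G = G_+ G_- *)
Definition lactM (x u : gT) : gT := (fact Gp Gm (x * u)).1.
Definition ractM (x u : gT) : gT := (fact Gp Gm (x * u)).2.
End Actions.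

Definition Gp1 (gT : finGroupType) (Gp : {set gT}) (xi : gT -> gT) : {set gT} :=
  [set u * xi u^-1 | u in Gp].
Definition Gp2 (gT : finGroupType) (Gp : {set gT}) (eta : gT -> gT) : {set gT} :=
  [set eta u^-1 * u | u in Gp].

Definition Fmap (gT : finGroupType) (Gp : {set gT}) (xi eta : gT -> gT) (g : gT) : gT :=
  let u := odflt 1 [pick u in Gp | g == u * xi u^-1] in eta u * u^-1.

Section Identities.
Variables (gT : finGroupType) (Gp Gm : {set gT}) (xi eta : gT -> gT).

Definition ident1 := forall u v, u \in Gp -> v \in Gp ->
  ractM Gp Gm (xi u) v = xi (ractP Gp Gm u (eta v)).
Definition ident2 := forall u v, u \in Gp -> v \in Gp ->
  lactP Gp Gm u (eta v) = eta (lactM Gp Gm (xi u) v).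
Definition ident3 := forall u v, u \in Gp -> v \in Gp ->
  u * v = lactM Gp Gm (xi u) v * ractP Gp Gm u (eta v).
Definition ident4 := forall u x, u \in Gp -> x \in Gm ->
  xi (lactM Gp Gm x u) * ractM Gp Gm x u = x * xi u.
Definition ident5 := forall u x, u \in Gp -> x \in Gm ->
  eta (lactM Gp Gm x u) * ractM Gp Gm x u = x * eta u.

Definition ident1' := forall u v, u \in Gp -> v \in Gp ->
  lactP Gp Gm v (xi u) = xi (lactM Gp Gm (eta v) u).
Definition ident2' := forall u v, u \in Gp -> v \in Gp ->
  ractM Gp Gm (eta v) u = eta (ractP Gp Gm v (xi u)).
Definition ident3' := forall u v, u \in Gp -> v \in Gp ->
  u * v = lactM Gp Gm (eta u) v * ractP Gp Gm u (xi v).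
Definition ident4' := forall u x, u \in Gp -> x \in Gm ->
  lactP Gp Gm u x * xi (ractP Gp Gm u x) = xi u * x.
Definition ident5' := forall u x, u \in Gp -> x \in Gm ->
  lactP Gp Gm u x * eta (ractP Gp Gm u x) = eta u * x.
End Identities.

From mathcomp Require Import all_boot all_fingroup.
Set Implicit Arguments. Unset Strict Implicit. Unset Printing Implicit Defensive.
Local Open Scope group_scope.

(* Inverting u x = (^u x)(u^x) gives x^-1 u^-1 = (u^x)^-1 (^u x)^-1, so inversion
   exchanges the two actions, and each primed identity is the unprimed one at
   inverted arguments.
   For a homomorphism z : G_+ -> G_-, identity (4) for z says precisely that
   conjugating u z(u^-1) by x^-1 in G_- gives (^x u) z((^x u)^-1).  Hence the set
   K_z = {u z(u^-1)} is closed under products and normalised by G_-, thus by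
   G = K_z G_- (as u = (u z(u^-1)) z(u)); conversely, normality of K_z gives (4)
   by uniqueness of factorization.  G_+'' is the set of inverses of K_eta, so it is a
   normal subgroup iff (5) holds.
   F always maps G_+' \ 1 bijectively onto G_+'' \ 1.  Given (4), F is
   multiplicative iff u eta(v) v^-1 u^-1 = eta(w) w^-1 with w = ^(xi u) v, which,
   factorizing u eta(v) uniquely, is (2) together with (3); and (3) with (4)
   forces (1). *)

Section PointwiseInverse.
Variables (gT : finGroupType) (P : {group gT}) (z : {morphism P >-> gT}).

Lemma Gp2_Gp1V : Gp2 P z = (Gp1 P z)^-1.
Proof.
apply/setP => y; rewrite inE; apply/imsetP/imsetP => [[u Pu ->] | [w Pw Ey]].
  by exists u^-1; rewrite ?groupV // invMg invgK morphV ?groupV ?invgK.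
exists w^-1; rewrite ?groupV //.
by rewrite -[y]invgK Ey invMg invgK morphV ?groupV ?invgK.
Qed.

Lemma Gp2_Gp1_of_group1 : group_set (Gp1 P z) -> Gp2 P z = Gp1 P z.
Proof. by move=> gs; rewrite Gp2_Gp1V (invGid (Group gs)). Qed.

Lemma Gp2_Gp1_of_group2 : group_set (Gp2 P z) -> Gp2 P z = Gp1 P z.
Proof. by move=> gs; rewrite -[Gp1 P z]invgK -Gp2_Gp1V (invGid (Group gs)). Qed.

End PointwiseInverse.

Section UniqueFactorization.
Variables (gT : finGroupType) (G P M : {group gT}).
Hypothesis PM_G : unique_factorization G P M.

Let sPG : P \subset G := proj1 PM_G.
Let sMG : M \subset G := proj1 (proj2 PM_G).

Lemma mulPM_inj p1 m1 p2 m2 : p1 \in P -> m1 \in M -> p2 \in P -> m2 \in M ->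
  p1 * m1 = p2 * m2 -> p1 = p2 /\ m1 = m2.
Proof.
move=> Pp1 Mm1 Pp2 Mm2 E.
have Gg : p1 * m1 \in G by apply: groupM; [exact: (subsetP sPG) | exact: (subsetP sMG)].
have [pm [_ U]] := proj2 (proj2 PM_G) _ Gg.
have e1 := U (p1, m1) (And3 Pp1 Mm1 (erefl _)).
by have [] := etrans (esym e1) (U (p2, m2) (And3 Pp2 Mm2 E)).
Qed.

Lemma mulMP_inj m1 p1 m2 p2 : m1 \in M -> p1 \in P -> m2 \in M -> p2 \in P ->
  m1 * p1 = m2 * p2 -> m1 = m2 /\ p1 = p2.
Proof.
move=> Mm1 Pp1 Mm2 Pp2 E.
have E' : p1^-1 * m1^-1 = p2^-1 * m2^-1 by rewrite -!invMg E.
have [/invg_inj-> /invg_inj->] :=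
  mulPM_inj (groupVr Pp1) (groupVr Mm1) (groupVr Pp2) (groupVr Mm2) E'.
by [].
Qed.

Lemma mulPM_eq1 p m : p \in P -> m \in M -> p * m = 1 -> p = 1.
Proof.
move=> Pp Mm E.
by have [] := mulPM_inj Pp Mm (group1 P) (group1 M) (etrans E (esym (mulg1 1))).
Qed.

Lemma fact_mulPM p m : p \in P -> m \in M -> fact P M (p * m) = (p, m).
Proof.
move=> Pp Mm; rewrite /fact.
case: pickP => [[p' m'] /= /andP[/andP[Pp' Mm'] /eqP E] | /(_ (p, m))].
  by have [-> ->] := mulPM_inj Pp Mm Pp' Mm' E.
by rewrite /= Pp Mm eqxx.
Qed.

Lemma fact_mulMP m p : m \in M -> p \in P -> fact M P (m * p) = (m, p).
Proof.
move=> Mm Pp; rewrite /fact.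
case: pickP => [[m' p'] /= /andP[/andP[Mm' Pp'] /eqP E] | /(_ (m, p))].
  by have [-> ->] := mulMP_inj Mm Pp Mm' Pp' E.
by rewrite /= Pp Mm eqxx.
Qed.

Lemma actM_mulPM x u p m : p \in P -> m \in M -> x * u = p * m ->
  lactM P M x u = p /\ ractM P M x u = m.
Proof. by move=> Pp Mm E; rewrite /lactM /ractM E fact_mulPM. Qed.

Lemma actP_mulMP u x m p : m \in M -> p \in P -> u * x = m * p ->
  lactP P M u x = m /\ ractP P M u x = p.
Proof. by move=> Mm Pp E; rewrite /lactP /ractP E fact_mulMP. Qed.

Lemma mem_mulPM g : g \in G -> exists p m, [/\ p \in P, m \in M & g = p * m].
Proof.
by move=> /(proj2 (proj2 PM_G))[[p m] [[/= Pp Mm E] _]]; exists p, m.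
Qed.

Lemma actM_spec x u : x \in M -> u \in P ->
  [/\ lactM P M x u \in P, ractM P M x u \in M & x * u = lactM P M x u * ractM P M x u].
Proof.
move=> Mx Pu.
have [p [m [Pp Mm E]]] := mem_mulPM (groupM (subsetP sMG x Mx) (subsetP sPG u Pu)).
by have [-> ->] := actM_mulPM Pp Mm E.
Qed.

Lemma actP_spec u x : u \in P -> x \in M ->
  [/\ lactP P M u x \in M, ractP P M u x \in P & u * x = lactP P M u x * ractP P M u x].
Proof.
move=> Pu Mx.
have Gxu : (u * x)^-1 \in G.
  by rewrite groupV groupM ?(subsetP sPG u Pu) ?(subsetP sMG x Mx).
have [p [m [Pp Mm E]]] := mem_mulPM Gxu.
have E' : u * x = m^-1 * p^-1 by rewrite -invMg -E invgK.
by have [-> ->] := actP_mulMP (groupVr Mm) (groupVr Pp) E'; rewrite !groupV.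
Qed.

Lemma actPV x u : x \in M -> u \in P ->
  lactP P M u^-1 x^-1 = (ractM P M x u)^-1 /\ ractP P M u^-1 x^-1 = (lactM P M x u)^-1.
Proof.
move=> Mx Pu; have [Pp Mm E] := actM_spec Mx Pu.
by apply: actP_mulMP; rewrite ?groupV // -!invMg E.
Qed.

Lemma actMV u x : u \in P -> x \in M ->
  lactM P M x^-1 u^-1 = (ractP P M u x)^-1 /\ ractM P M x^-1 u^-1 = (lactP P M u x)^-1.
Proof.
move=> Pu Mx; have [Mm Pp E] := actP_spec Pu Mx.
by apply: actM_mulPM; rewrite ?groupV // -!invMg E.
Qed.

Section Twist.
Variable z : {morphism P >-> gT}.

Lemma ident4_iff : ident4 P M z <-> ident4' P M z.
Proof.
split=> h u x Pu Mx; have := h u^-1 x^-1 (groupVr Pu) (groupVr Mx).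
  have [_ Pr _] := actP_spec Pu Mx; have [-> ->] := actMV Pu Mx.
  by rewrite !morphV // -!invMg => /invg_inj.
have [Pl _ _] := actM_spec Mx Pu; have [-> ->] := actPV Mx Pu.
by rewrite !morphV // -!invMg => /invg_inj.
Qed.

Hypothesis zM : z @* P \subset M.

Lemma morph_memM u : u \in P -> z u \in M.
Proof. by move=> Pu; apply: (subsetP zM); apply: mem_morphim. Qed.

Section Ident4.
Hypothesis h4 : ident4 P M z.

Lemma Gp1_conj x u : x \in M -> u \in P ->
  (u * z u^-1) ^ x^-1 = lactM P M x u * z (lactM P M x u)^-1.
Proof.
move=> Mx Pu; have [Pp _ E] := actM_spec Mx Pu.
have /(canRL (mulKg _)) Em := h4 Pu Mx.
by rewrite conjgE invgK !morphV // !mulgA E Em !mulgA !mulgK.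
Qed.

Lemma Gp1_mul u v : u \in P -> v \in P ->
  (u * z u^-1) * (v * z v^-1) =
  (u * lactM P M (z u)^-1 v) * z (u * lactM P M (z u)^-1 v)^-1.
Proof.
move=> Pu Pv; have Mx : (z u)^-1 \in M by rewrite groupV morph_memM.
have [Pw _ _] := actM_spec Mx Pv; have := Gp1_conj Mx Pv.
rewrite invgK => /(canRL (conjgK _)) ->.
by rewrite conjgE invgK invMg morphM ?groupV // !morphV // !mulgA mulgKV.
Qed.

Lemma group_set_Gp1 : group_set (Gp1 P z).
Proof.
apply/group_setP; split.
  by apply/imsetP; exists 1; rewrite ?invg1 ?morph1 ?mulg1.
move=> _ _ /imsetP[u Pu ->] /imsetP[v Pv ->]; rewrite Gp1_mul //.
have [Pw _ _] := actM_spec (groupVr (morph_memM Pu)) Pv.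
by apply/imsetP; exists (u * lactM P M (z u)^-1 v); rewrite ?groupM.
Qed.

Lemma Gp1_normal : Gp1 P z <| G.
Proof.
apply/andP; split.
  apply/subsetP => _ /imsetP[u Pu ->].
  by rewrite groupM ?(subsetP sPG u Pu) ?(subsetP sMG _ (morph_memM (groupVr Pu))).
apply/subsetP => g /mem_mulPM[p [m [Pp Mm ->]]]; rewrite inE.
apply/subsetP => _ /imsetP[k Kk ->].
have -> : p * m = (p * z p^-1) * (z p * m) by rewrite morphV // !mulgA mulgVK.
have Kp : p * z p^-1 \in Gp1 P z by apply/imsetP; exists p.
have Mx : (z p * m)^-1 \in M by rewrite groupV groupM ?morph_memM.
rewrite conjgM; have [u Pu ->] := imsetP (@groupJ _ (Group group_set_Gp1) _ _ Kk Kp).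
rewrite -[z p * m]invgK Gp1_conj //.
by have [Pw _ _] := actM_spec Mx Pu; apply/imsetP; exists (lactM P M (z p * m)^-1 u).
Qed.

End Ident4.

Lemma ident4_of_normal : Gp1 P z <| G -> ident4 P M z.
Proof.
case/andP=> _ nKG u x Pu Mx.
have Nx : x^-1 \in 'N(Gp1 P z) by apply: (subsetP nKG); rewrite groupV (subsetP sMG).
have : (u * z u^-1) ^ x^-1 \in Gp1 P z by rewrite memJ_norm //; apply/imsetP; exists u.
case/imsetP=> w Pw; have [Pp Mm E] := actM_spec Mx Pu.
rewrite conjgE invgK !mulgA E -!mulgA => Ew.
have Mr : ractM P M x u * (z u^-1 * x^-1) \in M.
  by apply: groupM => //; apply: groupM; rewrite ?groupV // morph_memM ?groupV.
have [<- /(canRL (mulgK _))] := mulPM_inj Pp Mr Pw (morph_memM (groupVr Pw)) Ew.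
by rewrite !morphV // invMg !invgK => ->; rewrite mulKVg.
Qed.

Lemma Gp1_eq1 u : u \in P -> (u * z u^-1 == 1) = (u == 1).
Proof.
move=> Pu; apply/eqP/eqP => [/mulPM_eq1 -> // | ->]; last by rewrite invg1 morph1 mulg1.
by rewrite morph_memM ?groupV.
Qed.

Lemma morph_mulV_eq1 u : u \in P -> (z u * u^-1 == 1) = (u == 1).
Proof. by move=> Pu; rewrite -invg_eq1 invMg invgK -morphV // Gp1_eq1. Qed.

End Twist.

Section Fmap.
Variables xi eta : {morphism P >-> gT}.
Hypotheses (xiM : xi @* P \subset M) (etaM : eta @* P \subset M).

Lemma FmapE u : u \in P -> Fmap P xi eta (u * xi u^-1) = eta u * u^-1.
Proof.
move=> Pu; rewrite /Fmap.
case: pickP => [w /andP[Pw /eqP E] | /(_ u)]; last by rewrite Pu eqxx.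
have Mxi w' : w' \in P -> xi w'^-1 \in M by move=> Pw'; rewrite morph_memM ?groupV.
by have [-> _] := mulPM_inj Pw (Mxi w Pw) Pu (Mxi u Pu) (esym E).
Qed.

Definition eta_conj := forall u v, u \in P -> v \in P ->
  (eta v * v^-1) ^ u^-1 = eta (lactM P M (xi u) v) * (lactM P M (xi u) v)^-1.

Lemma eta_conj_ident23 : eta_conj <-> ident2 P M xi eta /\ ident3 P M xi eta.
Proof.
split=> [hc | [h2 h3] u v Pu Pv].
  have act_eta_v u v : u \in P -> v \in P ->
      lactP P M u (eta v) = eta (lactM P M (xi u) v) /\
      ractP P M u (eta v) = (lactM P M (xi u) v)^-1 * (u * v).
    move=> Pu Pv; have [Pw _ _] := actM_spec (morph_memM xiM Pu) Pv.
    apply: actP_mulMP; rewrite ?morph_memM ?groupM ?groupV //.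
    move: (hc u v Pu Pv); rewrite conjgE invgK !mulgA.
    by move=> /(canRL (mulgK _)) /(canRL (mulgK _)); rewrite !invgK -!mulgA.
  split=> u v Pu Pv; have [E2 E3] := act_eta_v u v Pu Pv; first exact: E2.
  by rewrite E3 mulKVg.
have [_ _ E] := actP_spec Pu (morph_memM etaM Pv).
have /(canRL (mulKg _)) Eq := esym (h3 u v Pu Pv).
by rewrite conjgE invgK !mulgA E (h2 u v Pu Pv) Eq !mulgA !mulgK.
Qed.

Lemma ident1_of_ident34 : ident4 P M xi -> ident3 P M xi eta -> ident1 P M xi eta.
Proof.
move=> h4 h3 u v Pu Pv; have [Pw _ _] := actM_spec (morph_memM xiM Pu) Pv.
have /(canRL (mulKg _)) -> := h4 v (xi u) Pv (morph_memM xiM Pu).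
have /(canRL (mulKg _)) -> := esym (h3 u v Pu Pv).
by rewrite !morphM ?groupM ?groupV // morphV.
Qed.

Lemma Fmap_morphicP : ident4 P M xi ->
  morphic (Gp1 P xi) (Fmap P xi eta) <-> eta_conj.
Proof.
move=> h4; split=> [/morphicP Fmul u v Pu Pv | hc].
  have Ku : u^-1 * xi u^-1^-1 \in Gp1 P xi by apply/imsetP; exists u^-1; rewrite ?groupV.
  have Kv : v * xi v^-1 \in Gp1 P xi by apply/imsetP; exists v.
  have [Pw _ _] := actM_spec (groupVr (morph_memM xiM (groupVr Pu))) Pv.
  move: (Fmul _ _ Ku Kv); rewrite Gp1_mul ?groupV // !FmapE ?groupM ?groupV //.
  rewrite invMg invgK morphM ?groupV // (morphV xi Pu) invgK -!mulgA.
  by move=> /mulgI; rewrite conjgE invgK !mulgA => <-; rewrite mulgK.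
apply/morphicP => _ _ /imsetP[u Pu ->] /imsetP[v Pv ->].
have Mx : (xi u)^-1 \in M by rewrite groupV morph_memM.
have [Pw _ _] := actM_spec Mx Pv.
rewrite Gp1_mul // !FmapE ?groupM // morphM // invMg mulgA -(mulgA (eta u)).
have := hc u^-1 v (groupVr Pu) Pv; rewrite invgK (morphV xi Pu) => <-.
by rewrite conjgE !mulgA mulgK.
Qed.

Lemma Fmap_isom : isom (Gp1 P xi) (Gp2 P eta) (Fmap P xi eta).
Proof.
apply/eqP/setP => y; apply/imsetP/setD1P.
  case=> k /setD1P[nt /imsetP[u Pu Ek]] ->; rewrite Ek FmapE //.
  split; first by rewrite morph_mulV_eq1 // -(Gp1_eq1 xiM) // -Ek.
  by apply/imsetP; exists u^-1; rewrite ?groupV ?invgK.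
case=> nt /imsetP[w Pw Ey].
exists (w^-1 * xi w^-1^-1); last by rewrite FmapE ?groupV ?invgK.
apply/setD1P; split; last by apply/imsetP; exists w^-1; rewrite ?groupV.
by rewrite Gp1_eq1 ?groupV // -(morph_mulV_eq1 etaM) ?groupV // invgK -Ey.
Qed.

Lemma ident1_iff : ident1 P M xi eta <-> ident1' P M xi eta.
Proof.
split=> h u v Pu Pv; have := h u^-1 v^-1 (groupVr Pu) (groupVr Pv); rewrite !morphV //.
  have [Pl _ _] := actM_spec (morph_memM etaM Pv) Pu.
  have [_ ->] := actMV Pv (morph_memM xiM Pu); have [_ ->] := actPV (morph_memM etaM Pv) Pu.
  by rewrite morphV // => /invg_inj.
have [_ Pr _] := actP_spec Pu (morph_memM etaM Pv).
have [-> _] := actPV (morph_memM xiM Pu) Pv; have [-> _] := actMV Pu (morph_memM etaM Pv).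
by rewrite morphV // => /invg_inj.
Qed.

Lemma ident2_iff : ident2 P M xi eta <-> ident2' P M xi eta.
Proof.
split=> h u v Pu Pv; have := h u^-1 v^-1 (groupVr Pu) (groupVr Pv); rewrite !morphV //.
  have [_ Pr _] := actP_spec Pv (morph_memM xiM Pu).
  have [-> _] := actPV (morph_memM etaM Pv) Pu; have [-> _] := actMV Pv (morph_memM xiM Pu).
  by rewrite morphV // => /invg_inj.
have [Pl _ _] := actM_spec (morph_memM xiM Pu) Pv.
have [_ ->] := actMV Pu (morph_memM etaM Pv); have [_ ->] := actPV (morph_memM xiM Pu) Pv.
by rewrite morphV // => /invg_inj.
Qed.

Lemma ident3_iff : ident3 P M xi eta <-> ident3' P M xi eta.
Proof.
split=> h u v Pu Pv; have := h v^-1 u^-1 (groupVr Pv) (groupVr Pu); rewrite !morphV //.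
  have [-> _] := actMV Pu (morph_memM xiM Pv); have [_ ->] := actPV (morph_memM etaM Pu) Pv.
  by rewrite -!invMg => /invg_inj.
have [-> _] := actMV Pu (morph_memM etaM Pv); have [_ ->] := actPV (morph_memM xiM Pu) Pv.
by rewrite -!invMg => /invg_inj.
Qed.

End Fmap.
End UniqueFactorization.

Theorem proposition1 (gT : finGroupType) (G Gp Gm : {group gT})
    (xi eta : {morphism Gp >-> gT}) :
  unique_factorization G Gp Gm ->
  xi @* Gp \subset Gm -> eta @* Gp \subset Gm ->
  ((([/\ group_set (Gp1 Gp xi), Gp1 Gp xi <| G,
         group_set (Gp2 Gp eta) & Gp2 Gp eta <| G]
     /\ misom (Gp1 Gp xi) (Gp2 Gp eta) (Fmap Gp xi eta))
    <->
    [/\ ident1 Gp Gm xi eta, ident2 Gp Gm xi eta, ident3 Gp Gm xi eta,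
        ident4 Gp Gm xi & ident5 Gp Gm eta])
  /\ [/\ ident1 Gp Gm xi eta <-> ident1' Gp Gm xi eta,
         ident2 Gp Gm xi eta <-> ident2' Gp Gm xi eta,
         ident3 Gp Gm xi eta <-> ident3' Gp Gm xi eta,
         ident4 Gp Gm xi <-> ident4' Gp Gm xi
       & ident5 Gp Gm eta <-> ident5' Gp Gm eta]).
Proof.
move=> PM_G xiM etaM; split; last first.
  split; [exact: (ident1_iff PM_G) | exact: (ident2_iff PM_G) | exact: (ident3_iff PM_G)
         | exact: (ident4_iff PM_G) | exact: (ident4_iff PM_G)].
split=> [[[_ nK1 gsK2 nK2] /andP[Fmorph _]] | [_ h2 h3 h4 h5]].
  have h4 := ident4_of_normal PM_G xiM nK1.
  have h5 : ident4 Gp Gm eta.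
    by apply: (ident4_of_normal PM_G etaM); rewrite -Gp2_Gp1_of_group2.
  have /(eta_conj_ident23 PM_G xiM etaM)[h2 h3] := (Fmap_morphicP PM_G eta xiM h4).1 Fmorph.
  by split=> //; exact: (ident1_of_ident34 PM_G xiM h4 h3).
have K2E := Gp2_Gp1_of_group1 (group_set_Gp1 PM_G etaM h5).
split; first rewrite K2E.
  split; [exact: (group_set_Gp1 PM_G xiM) | exact: (Gp1_normal PM_G xiM)
         | exact: (group_set_Gp1 PM_G etaM) | exact: (Gp1_normal PM_G etaM)].
rewrite /misom (Fmap_isom PM_G xiM etaM) andbT.
by apply/(Fmap_morphicP PM_G eta xiM h4)/(eta_conj_ident23 PM_G xiM etaM).
Qed.
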